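(* Let $\mathbb{E}$ be a finitely complete category, $\Sigma$ a fibrational class of split epimorphisms, and suppose $\mathbb{E}$ is a $\Sigma$-Mal'tsev category. Let $R$ be an equivalence relation and $S$ a $\Sigma$-equivalence relation on an object $X$. If $R\cap S=\Delta_X$ (the discrete relation), then $[R,S]=0$.
   Context: A split epimorphism is a pair $(f,s)$ with $fs=1$. A class $\Sigma$ of split epimorphisms is fibrational if it contains all split epimorphisms $(f,s)$ with $f$ invertible and is stable under pullback along any morphism. A pair of morphisms with common codomain $Z$ is jointly extremally epic if it factors jointly through no non-invertible monomorphism into $Z$. $\mathbb{E}$ is $\Sigma$-Mal'tsev if for every split epimorphism $(f,s)\colon X\rightleftarrows Y$ in $\Sigma$ and every split epimorphism $(g,t)$ with $g\colon Y'\to Y$, letting $X'=Y'\times_YX$, $s'=(1_{Y'},sg)$, $\bar t=(tf,1_X)$, the pair $(s',\bar t)$ is jointly extremally epic. A $\Sigma$-relation is a reflexive relation $(d_0,d_1)\colon S\rightarrowtail X\times X$ with reflexivity $s_0$ such that $(d_0,s_0)\in\Sigma$; a $\Sigma$-equivalence relation is an equivalence relation which is a $\Sigma$-relation. For reflexive relations $R$ and $S$ on $X$, let $R\times_XS$ be the pullback of $d_0^S$ along $d_1^R$ (elements $xRySz$), $\sigma_0^R=(1_R,s_0^Sd_1^R)\colon R\to R\times_XS$ ($xRy\mapsto xRySy$) and $\sigma_0^S=(s_0^Rd_0^S,1_S)\colon S\to R\times_XS$ ($ySz\mapsto yRySz$). We write $[R,S]=0$ ($R$ and $S$ centralize each other)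 when there is a morphism $p\colon R\times_XS\to X$ (a connector) with $p\sigma_0^R=d_0^R$ and $p\sigma_0^S=d_1^S$, i.e. $p(xRySy)=x$ and $p(yRySz)=z$. *)

Record Cat : Type := {
  ob :> Type;
  hom : ob -> ob -> Type;
  idm : forall a, hom a a;
  comp : forall a b c0, hom b c0 -> hom a b -> hom a c0;
  comp_id_l : forall a b (f : hom a b), comp a b b (idm b) f = f;
  comp_id_r : forall a b (f : hom a b), comp a a b f (idm a) = f;
  comp_assoc : forall a b c d (h : hom c d) (g : hom b c) (f : hom a b),
      comp a c d h (comp a b c g f) = comp a b d (comp b c d h g) f
}.

Arguments hom {_} _ _.
Arguments idm {_} _.
Arguments comp {_ _ _ _} _ _.

Notation "g \o f" := (comp g f) (at level 40, left associativity).

Section Defs.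
Context {C : Cat}.

Definition is_iso {A B : C} (f : hom A B) : Prop :=
  exists g : hom B A, g \o f = idm A /\ f \o g = idm B.

Definition is_mono {A B : C} (m : hom A B) : Prop :=
  forall Z (a b : hom Z A), m \o a = m \o b -> a = b.

Definition is_terminal (T : C) : Prop :=
  forall A : C, (exists u : hom A T, True) /\ (forall u v : hom A T, u = v).

Definition is_pullback {A B D P : C} (f : hom A D) (g : hom B D)
  (p1 : hom P A) (p2 : hom P B) : Prop :=
  f \o p1 = g \o p2 /\
  forall Q (q1 : hom Q A) (q2 : hom Q B), f \o q1 = g \o q2 ->
    exists u : hom Q P, (p1 \o u = q1 /\ p2 \o u = q2) /\
      forall v : hom Q P, p1 \o v = q1 -> p2 \o v = q2 -> v = u.

Definition finitely_complete : Prop :=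
  (exists T : C, is_terminal T) /\
  forall (A B D : C) (f : hom A D) (g : hom B D),
    exists (P : C) (p1 : hom P A) (p2 : hom P B), is_pullback f g p1 p2.

Definition SEClass := forall X Y : C, hom X Y -> hom Y X -> Prop.

Definition is_class_of_split_epis (Sigma : SEClass) : Prop :=
  forall X Y (f : hom X Y) (s : hom Y X), Sigma X Y f s -> f \o s = idm Y.

Definition fibrational (Sigma : SEClass) : Prop :=
  is_class_of_split_epis Sigma /\
  (forall X Y (f : hom X Y) (s : hom Y X),
      f \o s = idm Y -> is_iso f -> Sigma X Y f s) /\
  (forall X Y (f : hom X Y) (s : hom Y X), Sigma X Y f s ->
   forall Y' (g : hom Y' Y) X' (f' : hom X' Y') (g' : hom X' X),
     is_pullback g f f' g' ->
     forall s' : hom Y' X', f' \o s' = idm Y' -> g' \o s' = s \o g ->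
       Sigma X' Y' f' s').

Definition jointly_extremally_epic {A B Z : C} (a : hom A Z) (b : hom B Z)
  : Prop :=
  forall M (m : hom M Z) (a' : hom A M) (b' : hom B M),
    is_mono m -> m \o a' = a -> m \o b' = b -> is_iso m.

(* Sigma-Mal'tsev: X' = Y' x_Y X with projections p1 : X' -> Y',
   p2 : X' -> X; s' = (1, s g), tbar = (t f, 1). *)
Definition Sigma_Maltsev (Sigma : SEClass) : Prop :=
  forall X Y (f : hom X Y) (s : hom Y X), Sigma X Y f s ->
  forall Y' (g : hom Y' Y) (t : hom Y Y'), g \o t = idm Y ->
  forall X' (p1 : hom X' Y') (p2 : hom X' X), is_pullback g f p1 p2 ->
  forall (s' : hom Y' X') (tb : hom X X'),
    p1 \o s' = idm Y' -> p2 \o s' = s \o g ->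
    p1 \o tb = t \o f -> p2 \o tb = idm X ->
    jointly_extremally_epic s' tb.

(* A relation (d0,d1) : S >-> X x X, i.e. a jointly monic pair *)
Definition jointly_monic {S X : C} (d0 d1 : hom S X) : Prop :=
  forall Z (a b : hom Z S), d0 \o a = d0 \o b -> d1 \o a = d1 \o b -> a = b.

Definition reflexive_relation {S X : C} (d0 d1 : hom S X) (s0 : hom X S)
  : Prop :=
  jointly_monic d0 d1 /\ d0 \o s0 = idm X /\ d1 \o s0 = idm X.

Definition equivalence_relation {S X : C} (d0 d1 : hom S X) (s0 : hom X S)
  : Prop :=
  reflexive_relation d0 d1 s0 /\
  (exists sg : hom S S, d0 \o sg = d1 /\ d1 \o sg = d0) /\
  (forall P (q1 q2 : hom P S), is_pullback d1 d0 q1 q2 ->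
     exists tau : hom P S, d0 \o tau = d0 \o q1 /\ d1 \o tau = d1 \o q2).

Definition Sigma_equivalence_relation (Sigma : SEClass) {S X : C}
  (d0 d1 : hom S X) (s0 : hom X S) : Prop :=
  equivalence_relation d0 d1 s0 /\ Sigma S X d0 s0.

(* (I, i1, i2) is the intersection R /\ S of relations (dR0,dR1), (dS0,dS1)
   on X, i.e. the pullback of the two monos into X x X *)
Definition is_intersection {R S X I : C} (dR0 dR1 : hom R X)
  (dS0 dS1 : hom S X) (i1 : hom I R) (i2 : hom I S) : Prop :=
  dR0 \o i1 = dS0 \o i2 /\ dR1 \o i1 = dS1 \o i2 /\
  forall Q (q1 : hom Q R) (q2 : hom Q S),
    dR0 \o q1 = dS0 \o q2 -> dR1 \o q1 = dS1 \o q2 ->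
    exists u : hom Q I, (i1 \o u = q1 /\ i2 \o u = q2) /\
      forall v : hom Q I, i1 \o v = q1 -> i2 \o v = q2 -> v = u.

(* R /\ S = Delta_X as subobjects of X x X: the intersection, as the
   relation (dR0 i1, dR1 i1) on X, is isomorphic to (1_X, 1_X) *)
Definition intersection_is_discrete {R S X : C} (dR0 dR1 : hom R X)
  (dS0 dS1 : hom S X) : Prop :=
  forall I (i1 : hom I R) (i2 : hom I S),
    is_intersection dR0 dR1 dS0 dS1 i1 i2 ->
    exists phi : hom I X, is_iso phi /\ dR0 \o i1 = phi /\ dR1 \o i1 = phi.

(* [R,S] = 0: for R x_X S (pullback of d0^S along d1^R) with the maps
   sigma_0^R, sigma_0^S, there is a connector p *)
Definition centralize {R S X : C} (dR0 dR1 : hom R X) (sR0 : hom X R)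
  (dS0 dS1 : hom S X) (sS0 : hom X S) : Prop :=
  forall P (pi1 : hom P R) (pi2 : hom P S), is_pullback dR1 dS0 pi1 pi2 ->
  forall (sigR : hom R P) (sigS : hom S P),
    pi1 \o sigR = idm R -> pi2 \o sigR = sS0 \o dR1 ->
    pi1 \o sigS = sR0 \o dS0 -> pi2 \o sigS = idm S ->
    exists p : hom P X, p \o sigR = dR0 /\ p \o sigS = dS1.

End Defs.


(* Write P = R x_X S (elements x R y S z) and Q = S x_X R (elements a S b R c).
   Because R and S are equivalence relations with R /\ S = Delta_X, an element
   of Q is determined by its endpoints (a, c): if a S b R c and a S b' R c then
   b S b' and b R b', so b = b'.  So Q -> X x X is monic, and so is its pullback
   M -> P along x R y S z |-> (x, z), i.e. the subobject of those x R y S z for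
   which some x S b R z exists.  It contains sigma_0^R (take b = x) and
   sigma_0^S (take b = z), so by the Sigma-Mal'tsev property it is all of P,
   and x R y S z |-> b is the required connector. *)

Definition has_pullbacks (C : Cat) : Prop :=
  forall (A B D : C) (f : hom A D) (g : hom B D),
    exists (P : C) (p1 : hom P A) (p2 : hom P B), is_pullback f g p1 p2.

Definition jointly_monic_pair {C : Cat} {P A B : C} (p1 : hom P A)
  (p2 : hom P B) : Prop :=
  forall Z (a b : hom Z P), p1 \o a = p1 \o b -> p2 \o a = p2 \o b -> a = b.

Definition is_product {C : Cat} {P A B : C} (p1 : hom P A) (p2 : hom P B)
  : Prop :=
  (forall Q (f : hom Q A) (g : hom Q B), exists h, p1 \o h = f /\ p2 \o h = g)
  /\ jointly_monic_pair p1 p2.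

Section Limits.
Context {C : Cat}.

Lemma pullback_lift {A B D P : C} {f : hom A D} {g : hom B D}
  {p1 : hom P A} {p2 : hom P B} :
  is_pullback f g p1 p2 ->
  forall Q (q1 : hom Q A) (q2 : hom Q B), f \o q1 = g \o q2 ->
    exists u, p1 \o u = q1 /\ p2 \o u = q2.
Proof.
  intros [_ Hu] Q q1 q2 E. destruct (Hu Q q1 q2 E) as [u [Hu12 _]]. eauto.
Qed.

Lemma pullback_jointly_monic {A B D P : C} {f : hom A D} {g : hom B D}
  {p1 : hom P A} {p2 : hom P B} :
  is_pullback f g p1 p2 -> jointly_monic_pair p1 p2.
Proof.
  intros [Hc Hu] Z a b E1 E2.
  destruct (Hu Z (p1 \o a) (p2 \o a)) as [u [_ Hun]].
  { rewrite !comp_assoc, Hc; reflexivity. }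
  rewrite (Hun a), (Hun b); auto.
Qed.

Lemma pullback_mono {A B D P : C} {f : hom A D} {g : hom B D}
  {p1 : hom P A} {p2 : hom P B} :
  is_pullback f g p1 p2 -> is_mono g -> is_mono p1.
Proof.
  intros HP Hg Z a b E. apply (pullback_jointly_monic HP); auto.
  apply Hg. destruct HP as [Hc _].
  rewrite !comp_assoc, <- Hc, <- !comp_assoc, E; reflexivity.
Qed.

Lemma jointly_monic_mono {A B D E : C} (f : hom D A) (g : hom D B)
  (h : hom E D) : jointly_monic_pair (f \o h) (g \o h) -> is_mono h.
Proof.
  intros Hm Z a b E'. apply Hm; rewrite <- !comp_assoc, E'; reflexivity.
Qed.

Lemma finitely_complete_products :
  finitely_complete (C := C) ->
  forall A B : C, exists (P : C) (p1 : hom P A) (p2 : hom P B), is_product p1 p2.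
Proof.
  intros [[T HT] HP] A B.
  destruct (HT A) as [[bA _] _]. destruct (HT B) as [[bB _] _].
  destruct (HP A B T bA bB) as [P [p1 [p2 HPb]]].
  exists P, p1, p2. split.
  - intros Q f g. apply (pullback_lift HPb), (proj2 (HT Q)).
  - exact (pullback_jointly_monic HPb).
Qed.

Lemma intersection_exists {X R S : C} (dR0 dR1 : hom R X) (dS0 dS1 : hom S X) :
  finitely_complete (C := C) ->
  exists I (i1 : hom I R) (i2 : hom I S), is_intersection dR0 dR1 dS0 dS1 i1 i2.
Proof.
  intros HC.
  destruct (finitely_complete_products HC X X) as [XX [pr1 [pr2 [Hpair Hpm]]]].
  destruct (Hpair R dR0 dR1) as [pR [HpR0 HpR1]].
  destruct (Hpair S dS0 dS1) as [pS [HpS0 HpS1]].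
  destruct (proj2 HC _ _ _ pR pS) as [I [i1 [i2 [Hc Hu]]]].
  exists I, i1, i2. split; [|split].
  - rewrite <- HpR0, <- HpS0, <- !comp_assoc, Hc; reflexivity.
  - rewrite <- HpR1, <- HpS1, <- !comp_assoc, Hc; reflexivity.
  - intros Q q1 q2 E0 E1. apply Hu, Hpm; rewrite !comp_assoc.
    + rewrite HpR0, HpS0; exact E0.
    + rewrite HpR1, HpS1; exact E1.
Qed.

End Limits.

Section EquivalenceRelations.
Context {C : Cat} (HPB : has_pullbacks C).
Context {S X : C} {d0 d1 : hom S X} {s0 : hom X S}.
Hypothesis HE : equivalence_relation d0 d1 s0.

Lemma equivalence_symmetric {Z : C} (a : hom Z S) :
  exists a', d0 \o a' = d1 \o a /\ d1 \o a' = d0 \o a.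
Proof.
  destruct HE as [_ [[sg [H0 H1]] _]].
  exists (sg \o a). rewrite !comp_assoc, H0, H1; auto.
Qed.

Lemma equivalence_transitive {Z : C} (a b : hom Z S) :
  d1 \o a = d0 \o b -> exists t, d0 \o t = d0 \o a /\ d1 \o t = d1 \o b.
Proof.
  intros E. destruct HE as [_ [_ Htr]].
  destruct (HPB _ _ _ d1 d0) as [P [q1 [q2 HP]]].
  destruct (Htr P q1 q2 HP) as [tau [H0 H1]].
  destruct (pullback_lift HP Z a b E) as [u [Hu1 Hu2]].
  exists (tau \o u). rewrite !comp_assoc, H0, H1, <- !comp_assoc, Hu1, Hu2; auto.
Qed.

Lemma equivalence_euclid_source {Z : C} (a b : hom Z S) :
  d0 \o a = d0 \o b -> exists t, d0 \o t = d1 \o a /\ d1 \o t = d1 \o b.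
Proof.
  intros E. destruct (equivalence_symmetric a) as [a' [H0 H1]].
  destruct (equivalence_transitive a' b) as [t [T0 T1]].
  { rewrite H1; exact E. }
  exists t. rewrite T0, H0; auto.
Qed.

Lemma equivalence_euclid_target {Z : C} (a b : hom Z S) :
  d1 \o a = d1 \o b -> exists t, d0 \o t = d0 \o a /\ d1 \o t = d0 \o b.
Proof.
  intros E. destruct (equivalence_symmetric b) as [b' [H0 H1]].
  destruct (equivalence_transitive a b') as [t [T0 T1]].
  { rewrite H0; exact E. }
  exists t. rewrite T1, H1; auto.
Qed.

End EquivalenceRelations.

Section DiscreteIntersection.
Context {C : Cat} (HC : finitely_complete (C := C)).
Context {X R S : C} {dR0 dR1 : hom R X} {sR0 : hom X R}
  {dS0 dS1 : hom S X} {sS0 : hom X S}.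
Hypothesis HR : equivalence_relation dR0 dR1 sR0.
Hypothesis HS : equivalence_relation dS0 dS1 sS0.
Hypothesis Hdisc : intersection_is_discrete dR0 dR1 dS0 dS1.

Lemma discrete_intersection_eq {Z : C} (r : hom Z R) (s : hom Z S) :
  dR0 \o r = dS0 \o s -> dR1 \o r = dS1 \o s -> dR0 \o r = dR1 \o r.
Proof.
  intros E0 E1.
  destruct (intersection_exists dR0 dR1 dS0 dS1 HC) as [I [i1 [i2 HI]]].
  destruct (proj2 (proj2 HI) Z r s E0 E1) as [u [[Hu1 _] _]].
  destruct (Hdisc I i1 i2 HI) as [phi [_ [H0 H1]]].
  rewrite <- Hu1, !comp_assoc, H0, H1; reflexivity.
Qed.

Lemma composite_span_jointly_monic {Q : C} (q1 : hom Q S) (q2 : hom Q R) :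
  is_pullback dS1 dR0 q1 q2 -> jointly_monic (dS0 \o q1) (dR1 \o q2).
Proof.
  intros HQ Z a b Ea Eb. rewrite <- !comp_assoc in Ea, Eb.
  pose proof (proj2 HC) as HPB.
  assert (Hsq : forall c : hom Z Q, dS1 \o (q1 \o c) = dR0 \o (q2 \o c)).
  { intro c. rewrite !comp_assoc, (proj1 HQ); reflexivity. }
  destruct (equivalence_euclid_source HPB HS _ _ Ea) as [s [Hs0 Hs1]].
  destruct (equivalence_euclid_target HPB HR _ _ Eb) as [r [Hr0 Hr1]].
  assert (Hmid : dS1 \o (q1 \o a) = dS1 \o (q1 \o b)).
  { rewrite Hsq, <- Hr0, (discrete_intersection_eq r s), Hr1, <- Hsq; auto.
    - rewrite Hr0, Hs0, Hsq; reflexivity.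
    - rewrite Hr1, Hs1, Hsq; reflexivity. }
  destruct HS as [[HSm _] _]. destruct HR as [[HRm _] _].
  apply (pullback_jointly_monic HQ).
  - apply HSm; assumption.
  - apply HRm; [rewrite <- !Hsq; exact Hmid | exact Eb].
Qed.

End DiscreteIntersection.

Section Connector.
Context {C : Cat} {Sigma : SEClass (C := C)}.
Hypothesis HC : finitely_complete (C := C).
Hypothesis HM : Sigma_Maltsev Sigma.
Context {X R S : C} {dR0 dR1 : hom R X} {sR0 : hom X R}
  {dS0 dS1 : hom S X} {sS0 : hom X S}.
Hypothesis HR : equivalence_relation dR0 dR1 sR0.
Hypothesis HS : Sigma_equivalence_relation Sigma dS0 dS1 sS0.
Hypothesis Hdisc : intersection_is_discrete dR0 dR1 dS0 dS1.
Context {P : C} {pi1 : hom P R} {pi2 : hom P S}.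
Hypothesis HP : is_pullback dR1 dS0 pi1 pi2.
Context {sigR : hom R P} {sigS : hom S P}.
Hypothesis HsigR1 : pi1 \o sigR = idm R.
Hypothesis HsigR2 : pi2 \o sigR = sS0 \o dR1.
Hypothesis HsigS1 : pi1 \o sigS = sR0 \o dS0.
Hypothesis HsigS2 : pi2 \o sigS = idm S.

Lemma middle_map_exists {Q : C} (q1 : hom Q S) (q2 : hom Q R)
  (cR : hom R Q) (cS : hom S Q) :
  is_pullback dS1 dR0 q1 q2 ->
  dS0 \o q1 \o cR = dR0 -> dR1 \o q2 \o cR = dR1 ->
  dS0 \o q1 \o cS = dS0 -> dR1 \o q2 \o cS = dS1 ->
  exists h : hom P Q, h \o sigR = cR /\ h \o sigS = cS.
Proof.
  intros HQ HcR0 HcR1 HcS0 HcS1.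
  destruct HR as [[_ [HR0 HR1]] _].
  destruct HS as [[[_ [_ HS1]] _] HSig].
  destruct (finitely_complete_products HC X X) as [XX [pr1 [pr2 [Hpair Hpm]]]].
  destruct (Hpair P (dR0 \o pi1) (dS1 \o pi2)) as [al [Hal1 Hal2]].
  destruct (Hpair Q (dS0 \o q1) (dR1 \o q2)) as [be [Hbe1 Hbe2]].
  assert (Hbe : is_mono be).
  { apply (jointly_monic_mono pr1 pr2). rewrite Hbe1, Hbe2.
    exact (composite_span_jointly_monic HC HR (proj1 HS) Hdisc q1 q2 HQ). }
  destruct (proj2 HC _ _ _ al be) as [M [m [n HMn]]].
  assert (Hm : is_mono m) by exact (pullback_mono HMn Hbe).
  destruct (pullback_lift HMn R sigR cR) as [bR [HbR1 HbR2]].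
  { apply Hpm; rewrite !comp_assoc.
    - rewrite Hal1, Hbe1, <- comp_assoc, HsigR1, comp_id_r, HcR0; reflexivity.
    - rewrite Hal2, Hbe2, <- comp_assoc, HsigR2, comp_assoc, HS1, comp_id_l, HcR1;
        reflexivity. }
  destruct (pullback_lift HMn S sigS cS) as [bS [HbS1 HbS2]].
  { apply Hpm; rewrite !comp_assoc.
    - rewrite Hal1, Hbe1, <- comp_assoc, HsigS1, comp_assoc, HR0, comp_id_l, HcS0;
        reflexivity.
    - rewrite Hal2, Hbe2, <- comp_assoc, HsigS2, comp_id_r, HcS1; reflexivity. }
  destruct (HM S X dS0 sS0 HSig R dR1 sR0 HR1 P pi1 pi2 HP sigR sigS
              HsigR1 HsigR2 HsigS1 HsigS2 M m bR bS Hm HbR1 HbS1)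
    as [g [Hgm _]].
  exists (n \o g). split.
  - rewrite <- HbR2, <- HbR1, comp_assoc, <- (comp_assoc _ _ _ _ _ n g m), Hgm,
      comp_id_r; reflexivity.
  - rewrite <- HbS2, <- HbS1, comp_assoc, <- (comp_assoc _ _ _ _ _ n g m), Hgm,
      comp_id_r; reflexivity.
Qed.

End Connector.

Theorem proposition3p6 (C : Cat) (Sigma : @SEClass C)
  (HC : @finitely_complete C) (HSig : fibrational Sigma)
  (HM : Sigma_Maltsev Sigma)
  (X R S : C) (dR0 dR1 : hom R X) (sR0 : hom X R)
  (dS0 dS1 : hom S X) (sS0 : hom X S)
  (HR : equivalence_relation dR0 dR1 sR0)
  (HS : Sigma_equivalence_relation Sigma dS0 dS1 sS0)
  (Hdisc : intersection_is_discrete dR0 dR1 dS0 dS1) :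
  centralize dR0 dR1 sR0 dS0 dS1 sS0.
Proof.
  intros P pi1 pi2 HP sigR sigS HsigR1 HsigR2 HsigS1 HsigS2.
  pose proof HR as [[_ [HR0 HR1]] _].
  pose proof HS as [[[_ [HS0 HS1]] _] _].
  destruct (proj2 HC _ _ _ dS1 dR0) as [Q [q1 [q2 HQ]]].
  destruct (pullback_lift HQ R (sS0 \o dR0) (idm R)) as [cR [HcR1 HcR2]].
  { rewrite comp_assoc, HS1, comp_id_l, comp_id_r; reflexivity. }
  destruct (pullback_lift HQ S (idm S) (sR0 \o dS1)) as [cS [HcS1 HcS2]].
  { rewrite comp_id_r, comp_assoc, HR0, comp_id_l; reflexivity. }
  destruct (middle_map_exists HC HM HR HS Hdisc HP HsigR1 HsigR2 HsigS1 HsigS2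
              q1 q2 cR cS HQ) as [h [HhR HhS]].
  - rewrite <- comp_assoc, HcR1, comp_assoc, HS0, comp_id_l; reflexivity.
  - rewrite <- comp_assoc, HcR2, comp_id_r; reflexivity.
  - rewrite <- comp_assoc, HcS1, comp_id_r; reflexivity.
  - rewrite <- comp_assoc, HcS2, comp_assoc, HR1, comp_id_l;
      reflexivity.
  - exists (dR0 \o q2 \o h). split.
    + rewrite <- comp_assoc, HhR, <- comp_assoc, HcR2, comp_id_r; reflexivity.
    + rewrite <- comp_assoc, HhS, <- comp_assoc, HcS2, comp_assoc, HR0, comp_id_l;
        reflexivity.
Qed.
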